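(* Let $D=0.5$, $N_p\ge1$, and let $p_1,\dots,p_{N_p}$ be the PWM basis functions defined in the context. Let $f:[0,1]\to\mathbb R$ be any function such that: the restriction of $f$ to $[0,0.5)$ coincides with a polynomial of degree at most $N_p$; $f$ is continuous at $\tau=0.5$; and $f(\tau+0.5)=-f(\tau)$ for all $\tau\in[0,0.5]$. Then $f$ is a linear combination of $p_1,\dots,p_{N_p}$.
   Context: The PWM basis functions with duty cycle $D\in(0,1)$ are functions of the relative time $\tau\in[0,1]$, defined recursively as follows. Set $p_0(\tau)=1$ on $[0,1]$, and $$p_1(\tau)=\begin{cases}\sqrt3\,\dfrac{2\tau-D}{D}, & 0\le\tau\le D,\\[2mm] \sqrt3\,\dfrac{1+D-2\tau}{1-D}, & D\le\tau\le 1.\end{cases}$$ For $k\ge2$, define $p_k^\star(\tau)=\int_D^\tau p_{k-1}(\tau')\,d\tau'$, then $$\overline p_k(\tau)=p_k^\star(\tau)-\sum_{l=0}^{k-1}p_l(\tau)\int_0^1 p_l(s)\,p_k^\star(s)\,ds,\qquad p_k(\tau)=\frac{\overline p_k(\tau)}{\left(\int_0^1\overline p_k(s)^2\,ds\right)^{1/2}}.$$ *)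

From Stdlib Require Import Reals Lra List ClassicalEpsilon.
Open Scope R_scope.

(* Total version of the Riemann integral: RiemannInt when f is Riemann
   integrable on [a,b] (either orientation, as in Stdlib), 0 otherwise.
   RiemannInt does not depend on the integrability proof (RiemannInt_P5). *)
Definition Rint (f : R -> R) (a b : R) : R :=
  match excluded_middle_informative (inhabited (Riemann_integrable f a b)) with
  | left H => RiemannInt (epsilon H (fun _ => True))
  | right _ => 0
  end.

Definition pwm0 (D : R) : R -> R := fun _ => 1.

Definition pwm1 (D : R) : R -> R := fun t =>
  if Rle_dec t D then sqrt 3 * ((2 * t - D) / D)
  else sqrt 3 * ((1 + D - 2 * t) / (1 - D)).

Definition pwm_next (D : R) (L : list (R -> R)) : R -> R :=
  let plast := last L (fun _ => 0) in
  let pstar := fun t => Rint plast D t in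
  let pbar := fun t =>
    pstar t - fold_right Rplus 0
      (map (fun pl => pl t * Rint (fun s => pl s * pstar s) 0 1) L) in
  let nrm := sqrt (Rint (fun s => (pbar s) ^ 2) 0 1) in
  fun t => pbar t / nrm.

Fixpoint pwm_list (D : R) (k : nat) : list (R -> R) :=
  match k with
  | O => pwm0 D :: nil
  | S O => pwm0 D :: pwm1 D :: nil
  | S k' => let L := pwm_list D k' in L ++ (pwm_next D L :: nil)
  end.

Definition pwm (D : R) (k : nat) : R -> R := nth k (pwm_list D k) (fun _ => 0).

(* For D = 1/2 every p_k with k >= 1 is antiperiodic, p_k(t + 1/2) = - p_k(t), and
   a polynomial of exact degree k on [0, 1/2].  Indeed p_k^* integrates an
   antiperiodic polynomial of degree k - 1, so it is a polynomial of degree k on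
   each half whose two pieces differ from antiperiodicity by a constant; the
   projection on p_0 removes exactly that constant and the projections on
   p_1, ..., p_(k-1) preserve antiperiodicity.  The normalisation is harmless
   because a polynomial of exact degree k has positive L2 norm.  Hence p_1, ...,
   p_N form a triangular basis of the antiperiodic functions that are polynomials
   of degree <= N on [0, 1/2], and f is such a function by continuity at 1/2. *)
From Stdlib Require Import Reals Lra Lia List Classical ClassicalEpsilon.
From Coquelicot Require Import Coquelicot.
Open Scope R_scope.

Definition poly_fun (c : nat -> R) (m : nat) (t : R) : R :=
  sum_f_R0 (fun i => c i * t ^ i) m.

Definition poly_lead (m : nat) (l : R) (P : R -> R) : Prop :=
  exists c, c m = l /\ forall t, P t = poly_fun c m t.

Lemma poly_fun_S c m t :
  poly_fun c (S m) t = c 0%nat + t * poly_fun (fun i => c (S i)) m t.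
Proof.
  unfold poly_fun; induction m as [|m IHm]; [simpl; ring|].
  rewrite tech5, IHm, tech5; simpl; ring.
Qed.

Lemma poly_lead_zero m : poly_lead m 0 (fun _ => 0).
Proof.
  exists (fun _ => 0); split; [reflexivity|]; intros t; unfold poly_fun.
  induction m as [|m IHm]; simpl; [ring|rewrite <- IHm; ring].
Qed.

Lemma poly_lead_weaken m l P : poly_lead m l P -> poly_lead (S m) 0 P.
Proof.
  intros [c [_ HP]].
  exists (fun i => if Nat.eqb i (S m) then 0 else c i); split.
  - now rewrite Nat.eqb_refl.
  - intros t; rewrite HP; unfold poly_fun; rewrite tech5, Nat.eqb_refl, Rmult_0_l, Rplus_0_r.
    apply sum_eq; intros i Hi.
    now replace (Nat.eqb i (S m)) with false by (symmetry; apply Nat.eqb_neq; lia).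
Qed.

Lemma poly_lead_drop m P : poly_lead (S m) 0 P -> exists l, poly_lead m l P.
Proof.
  intros [c [Hc HP]]; exists (c m), c; split; [reflexivity|].
  intros t; rewrite HP; unfold poly_fun; rewrite tech5, Hc; ring.
Qed.

Lemma poly_lead_lin m l1 l2 P Q a b : poly_lead m l1 P -> poly_lead m l2 Q ->
  poly_lead m (a * l1 + b * l2) (fun t => a * P t + b * Q t).
Proof.
  intros [c [Hc HP]] [d [Hd HQ]]; exists (fun i => a * c i + b * d i); split.
  - now rewrite Hc, Hd.
  - intros t; rewrite HP, HQ; unfold poly_fun; rewrite 2!scal_sum, <- plus_sum.
    apply sum_eq; intros; ring.
Qed.

Lemma poly_lead_add_const m l P k :
  poly_lead (S m) l P -> poly_lead (S m) l (fun t => P t + k).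
Proof.
  intros [c [Hc HP]].
  exists (fun i => match i with O => c O + k | S j => c (S j) end); split; [exact Hc|].
  intros t; rewrite HP, !poly_fun_S; ring.
Qed.

Lemma poly_fun_derivable c m t : ex_derive (poly_fun c m) t.
Proof.
  revert c; induction m as [|m IHm]; intros c.
  - unfold poly_fun; simpl; auto_derive; auto.
  - apply (ex_derive_ext (fun t => c 0%nat + t * poly_fun (fun i => c (S i)) m t)).
    { intros; now rewrite poly_fun_S. }
    auto_derive; apply IHm.
Qed.

Lemma poly_lead_continuous m l P : poly_lead m l P -> forall t, continuous P t.
Proof.
  intros [c [_ HP]] t.
  apply (continuous_ext (poly_fun c m)); [intros; now rewrite HP|].
  apply (@ex_derive_continuous R_AbsRing R_NormedModule), poly_fun_derivable.
Qed.

Lemma poly_lead_primitive m l P : poly_lead m l P ->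
  exists Q, poly_lead (S m) (l / INR (S m)) Q /\ Q 0 = 0 /\
    forall t, is_derive Q t (P t).
Proof.
  intros [c [Hc HP]].
  set (e := fun i => match i with O => 0 | S j => c j / INR (S j) end).
  exists (poly_fun e (S m)); split; [|split].
  - exists e; split; [simpl e; now rewrite Hc | reflexivity].
  - rewrite poly_fun_S; simpl; ring.
  - intros t; rewrite HP; clear HP Hc; revert t; induction m as [|m IHm]; intros t.
    + unfold poly_fun; simpl; auto_derive; auto; simpl; field.
    + apply (is_derive_ext (fun t => poly_fun e (S m) t + e (S (S m)) * t ^ S (S m))).
      { intros u; unfold poly_fun; now rewrite tech5. }
      replace (poly_fun c (S m) t) with (poly_fun c m t + c (S m) * t ^ S m)
        by (unfold poly_fun; now rewrite tech5).
      apply (is_derive_plus (poly_fun e (S m)) (fun t => e (S (S m)) * t ^ S (S m)));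
        [apply IHm|].
      simpl e; auto_derive; auto; rewrite <- !S_INR; simpl pow; field.
      destruct m; [lra|]; pose proof (pos_INR (S (S m))); lra.
Qed.

Lemma continuous_vanishing_on_interval g a b x : continuity_pt g x -> a < b ->
  a <= x <= b -> (forall t, a < t < b -> g t = 0) -> g x = 0.
Proof.
  intros Hc Hab Hx Hz; apply NNPP; intros Hgx.
  destruct (Hc (Rabs (g x))) as [alp [Halp H]]; [now apply Rabs_pos_lt|].
  set (d := Rmin alp ((b - a) / 2) / 2).
  assert (Hd : 0 < d) by (unfold d; apply Rmin_case; lra).
  assert (Hd1 : d <= alp / 2) by (unfold d; pose proof (Rmin_l alp ((b - a) / 2)); lra).
  assert (Hd2 : d <= (b - a) / 4) by (unfold d; pose proof (Rmin_r alp ((b - a) / 2)); lra).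
  assert (Hy : exists y, a < y < b /\ Rabs (y - x) = d).
  { destruct (Rlt_le_dec x ((a + b) / 2)).
    - exists (x + d); split; [lra|]; replace (x + d - x) with d by ring; apply Rabs_right; lra.
    - exists (x - d); split; [lra|]; replace (x - d - x) with (- d) by ring.
      rewrite Rabs_Ropp; apply Rabs_right; lra. }
  destruct Hy as [y [Hy Hyd]].
  specialize (H y); simpl in H; unfold R_dist in H; rewrite Hz, Rminus_0_l, Rabs_Ropp in H by exact Hy.
  apply (Rlt_irrefl (Rabs (g x))), H; split; [split; [exact I|]|rewrite Hyd; lra].
  intros ->; rewrite Rminus_diag, Rabs_R0 in Hyd; lra.
Qed.

(* If P vanished on (0, b) it would vanish at 0 by continuity, so P t / t would too. *)
Lemma poly_lead_nonzero b m : 0 < b -> forall l P, poly_lead m l P -> l <> 0 ->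
  exists t, 0 < t < b /\ P t <> 0.
Proof.
  intros Hb; induction m as [|m IHm]; intros l P [c [Hc HP]] Hl.
  - exists (b / 2); split; [lra|]; rewrite HP; unfold poly_fun; simpl; rewrite Hc; lra.
  - apply NNPP; intros Hn.
    assert (Hz : forall t, 0 < t < b -> P t = 0).
    { intros t Ht; apply NNPP; intros H'; apply Hn; now exists t. }
    assert (Hc0 : c 0%nat = 0).
    { assert (H0 : P 0 = 0).
      { apply (continuous_vanishing_on_interval P 0 b); [|lra|lra|exact Hz].
        apply continuity_pt_filterlim, (poly_lead_continuous (S m) l); now exists c. }
      rewrite HP, poly_fun_S in H0; lra. }
    destruct (IHm l (poly_fun (fun i => c (S i)) m)) as [t [Ht Hne]];
      [now exists (fun i => c (S i)) | exact Hl |].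
    apply Hne; specialize (Hz t Ht); rewrite HP, poly_fun_S, Hc0, Rplus_0_l in Hz.
    apply Rmult_integral in Hz; destruct Hz; [lra|assumption].
Qed.

Lemma Rint_RInt f a b : ex_RInt f a b -> Rint f a b = RInt f a b.
Proof.
  intros H; unfold Rint; destruct excluded_middle_informative as [Hi|Hn].
  - now rewrite (RInt_Reals f a b (epsilon Hi (fun _ => True))).
  - exfalso; apply Hn; constructor; now apply ex_RInt_Reals_0.
Qed.

Lemma ex_RInt_continuous_R (g : R -> R) (a b : R) : (forall x, continuous g x) -> ex_RInt g a b.
Proof. intros C; apply (@ex_RInt_continuous R_CompleteNormedModule); intros x _; apply C. Qed.

Lemma continuous_shift (g : R -> R) (v x : R) : (forall y, continuous g y) -> continuous (fun s => g (s + v)) x.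
Proof.
  intros C; apply (continuous_comp (fun s => s + v) g); [|apply C].
  apply (continuous_plus (fun s : R => s) (fun _ => v)); [apply continuous_id|apply continuous_const].
Qed.

Lemma continuous_sqr (g : R -> R) (x : R) : continuous g x -> continuous (fun y => g y ^ 2) x.
Proof.
  intros C; apply (continuous_ext (fun y => mult (g y) (g y))).
  { intros y; unfold mult; simpl; ring. }
  exact (continuous_mult g g x C C).
Qed.

Lemma RInt_halves (h P1 P2 : R -> R) :
  (forall x, continuous P1 x) -> (forall x, continuous P2 x) ->
  (forall t, 0 <= t <= 1/2 -> h t = P1 t /\ h (t + 1/2) = P2 t) ->
  ex_RInt h 0 1 /\ RInt h 0 1 = RInt P1 0 (1/2) + RInt P2 0 (1/2).
Proof.
  intros C1 C2 H.
  assert (Eq1 : forall x, Rmin 0 (1/2) < x < Rmax 0 (1/2) -> P1 x = h x).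
  { intros x Hx; rewrite Rmin_left, Rmax_right in Hx by lra; symmetry; apply H; lra. }
  assert (Eq2 : forall x, Rmin (1/2) 1 < x < Rmax (1/2) 1 -> P2 (x + - (1/2)) = h x).
  { intros x Hx; rewrite Rmin_left, Rmax_right in Hx by lra.
    replace x with (x + - (1/2) + 1/2) at 2 by ring; symmetry; apply H; lra. }
  assert (E1 : ex_RInt h 0 (1/2))
    by (apply (ex_RInt_ext P1); [exact Eq1 | now apply ex_RInt_continuous_R]).
  assert (E2 : ex_RInt h (1/2) 1).
  { apply (ex_RInt_ext (fun x => P2 (x + - (1/2)))); [exact Eq2|].
    apply ex_RInt_continuous_R; intros; now apply continuous_shift. }
  split; [now apply (ex_RInt_Chasles _ _ (1/2))|].
  rewrite <- (RInt_Chasles h 0 (1/2) 1) by assumption.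
  rewrite <- (RInt_ext _ _ _ _ Eq1), <- (RInt_ext _ _ _ _ Eq2).
  assert (HC := RInt_comp_lin P2 1 (- (1/2)) (1/2) 1).
  replace (1 * (1/2) + - (1/2)) with 0 in HC by lra.
  replace (1 * 1 + - (1/2)) with (1/2) in HC by lra.
  rewrite <- HC by now apply ex_RInt_continuous_R.
  unfold plus, scal; simpl; unfold mult; simpl.
  f_equal; apply RInt_ext; intros x _; now rewrite !Rmult_1_l.
Qed.

Lemma RInt_gt_0_witness (g : R -> R) a b : a < b -> (forall x, continuous g x) ->
  (forall x, 0 <= g x) -> (exists t0, a < t0 < b /\ 0 < g t0) -> 0 < RInt g a b.
Proof.
  intros Hab C Hg [t0 [Ht0 Hp]].
  destruct (proj2 (continuity_pt_filterlim g t0) (C t0) (g t0 / 2)) as [del [Hdel Hd]];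
    [lra|].
  set (e := Rmin del (Rmin (t0 - a) (b - t0)) / 2).
  assert (He : 0 < e) by (unfold e; repeat apply Rmin_case; lra).
  assert (Hed : e <= del / 2) by (unfold e; pose proof (Rmin_l del (Rmin (t0 - a) (b - t0))); lra).
  assert (Heab : e <= (t0 - a) / 2 /\ e <= (b - t0) / 2).
  { unfold e; pose proof (Rmin_r del (Rmin (t0 - a) (b - t0))).
    pose proof (Rmin_l (t0 - a) (b - t0)); pose proof (Rmin_r (t0 - a) (b - t0)); lra. }
  rewrite <- (RInt_Chasles g a (t0 - e) b), <- (RInt_Chasles g (t0 - e) (t0 + e) b)
    by now apply ex_RInt_continuous_R.
  unfold plus; simpl.
  assert (A1 : 0 <= RInt g a (t0 - e))
    by (apply RInt_ge_0; [lra|now apply ex_RInt_continuous_R|intros; apply Hg]).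
  assert (A3 : 0 <= RInt g (t0 + e) b)
    by (apply RInt_ge_0; [lra|now apply ex_RInt_continuous_R|intros; apply Hg]).
  assert (A2 : 0 < RInt g (t0 - e) (t0 + e)).
  { apply RInt_gt_0; [lra| |intros; apply C]; intros x Hx.
    destruct (Req_dec x t0) as [->|Hne]; [lra|].
    assert (Hlt : Rabs (g x - g t0) < g t0 / 2).
    { apply Hd; split; [split; [exact I|auto]|apply Rabs_def1; lra]. }
    apply Rabs_def2 in Hlt; lra. }
  lra.
Qed.

Definition antiperiodic_poly (m : nat) (l : R) (g : R -> R) : Prop :=
  exists P, poly_lead m l P /\
    forall t, 0 <= t <= 1/2 -> g t = P t /\ g (t + 1/2) = - P t.

Lemma antiperiodic_poly_ext m l g h :
  (forall t, g t = h t) -> antiperiodic_poly m l g -> antiperiodic_poly m l h.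
Proof. intros E [P [HP H]]; exists P; split; [exact HP|]; intros t Ht; rewrite <- !E; auto. Qed.

Lemma antiperiodic_poly_zero m : antiperiodic_poly m 0 (fun _ => 0).
Proof. exists (fun _ => 0); split; [apply poly_lead_zero|]; intros; split; ring. Qed.

Lemma antiperiodic_poly_lin m l1 l2 g1 g2 a b :
  antiperiodic_poly m l1 g1 -> antiperiodic_poly m l2 g2 ->
  antiperiodic_poly m (a * l1 + b * l2) (fun t => a * g1 t + b * g2 t).
Proof.
  intros [P [HP H1]] [Q [HQ H2]]; exists (fun t => a * P t + b * Q t).
  split; [now apply poly_lead_lin|].
  intros t Ht; destruct (H1 t Ht) as [-> ->], (H2 t Ht) as [-> ->]; split; ring.
Qed.

Lemma antiperiodic_poly_weaken m l g :
  antiperiodic_poly m l g -> antiperiodic_poly (S m) 0 g.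
Proof. intros [P [HP H]]; exists P; split; [exact (poly_lead_weaken m l P HP)|exact H]. Qed.

Lemma antiperiodic_poly_drop m g :
  antiperiodic_poly (S m) 0 g -> exists l, antiperiodic_poly m l g.
Proof. intros [P [HP H]]; destruct (poly_lead_drop m P HP) as [l Hl]; now exists l, P. Qed.

Lemma antiperiodic_poly_fold m (w : (R -> R) -> R) L :
  List.Forall (fun g => exists l, antiperiodic_poly m l g) L ->
  exists l, antiperiodic_poly m l (fun t => fold_right Rplus 0 (map (fun g => g t * w g) L)).
Proof.
  induction 1 as [|g L [l1 H1] _ [l2 H2]]; [exists 0; apply antiperiodic_poly_zero|].
  exists (w g * l1 + 1 * l2).
  apply (antiperiodic_poly_ext _ _
    (fun t => w g * g t + 1 * fold_right Rplus 0 (map (fun g => g t * w g) L)));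
    [intros t; simpl; ring|].
  now apply antiperiodic_poly_lin.
Qed.

Lemma antiperiodic_poly_Rint_from_half k l g : antiperiodic_poly k l g ->
  exists Q, poly_lead (S k) (l / INR (S k)) Q /\
    forall t, 0 <= t <= 1/2 ->
      Rint g (1/2) t = Q t - Q (1/2) /\ Rint g (1/2) (t + 1/2) = - Q t.
Proof.
  intros [P [HP Hrep]]; destruct (poly_lead_primitive _ _ _ HP) as [Q [HQ [Q0 HdQ]]].
  exists Q; split; [exact HQ|].
  assert (CP := poly_lead_continuous _ _ _ HP).
  intros t Ht; split.
  - assert (E : forall x, Rmin (1/2) t < x < Rmax (1/2) t -> P x = g x).
    { intros x Hx; rewrite Rmin_right, Rmax_left in Hx by lra; symmetry; apply Hrep; lra. }
    rewrite Rint_RInt by (apply (ex_RInt_ext P); [exact E|now apply ex_RInt_continuous_R]).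
    rewrite <- (RInt_ext _ _ _ _ E).
    apply is_RInt_unique, (is_RInt_derive Q P); intros; [apply HdQ|apply CP].
  - set (G := fun s => - P (s + - (1/2))).
    assert (CG : forall x, continuous G x)
      by (intros x; apply (continuous_opp (fun s => P (s + - (1/2)))); now apply continuous_shift).
    assert (E : forall x, Rmin (1/2) (t + 1/2) < x < Rmax (1/2) (t + 1/2) -> G x = g x).
    { intros x Hx; rewrite Rmin_left, Rmax_right in Hx by lra; unfold G.
      replace x with (x + - (1/2) + 1/2) at 2 by ring; symmetry; apply Hrep; lra. }
    rewrite Rint_RInt by (apply (ex_RInt_ext G); [exact E|now apply ex_RInt_continuous_R]).
    rewrite <- (RInt_ext _ _ _ _ E).
    assert (HdG : forall x, is_derive (fun s => - Q (s + - (1/2))) x (G x)).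
    { intros x; unfold G.
      replace (- P (x + - (1/2))) with (opp (scal 1 (P (x + - (1/2)))))
        by (unfold opp, scal; simpl; unfold mult; simpl; ring).
      apply (@is_derive_opp R_AbsRing R_NormedModule (fun s => Q (s + - (1/2)))).
      apply (@is_derive_comp R_AbsRing R_NormedModule Q (fun s => s + - (1/2))); [apply HdQ|].
      auto_derive; auto. }
    rewrite (is_RInt_unique G _ _ _ (is_RInt_derive _ G _ _ (fun x _ => HdG x) (fun x _ => CG x))).
    unfold minus, plus, opp; simpl.
    replace (t + 1/2 + - (1/2)) with t by ring; replace (1/2 + - (1/2)) with 0 by ring.
    rewrite Q0; ring.
Qed.

Lemma Rint_pwm0_mul (ps Q : R -> R) : (forall x, continuous Q x) ->
  (forall t, 0 <= t <= 1/2 -> ps t = Q t - Q (1/2) /\ ps (t + 1/2) = - Q t) ->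
  Rint (fun s => pwm0 (1/2) s * ps s) 0 1 = - Q (1/2) / 2.
Proof.
  intros CQ H.
  assert (C1 : forall x, continuous (fun t => Q t - Q (1/2)) x).
  { intros x; apply (continuous_minus Q (fun _ => Q (1/2))); [apply CQ|apply continuous_const]. }
  assert (C2 : forall x, continuous (fun t => - Q t) x)
    by (intros x; exact (continuous_opp Q x (CQ x))).
  destruct (RInt_halves (fun s => pwm0 (1/2) s * ps s) _ _ C1 C2) as [Ex Eq].
  { intros t Ht; unfold pwm0; destruct (H t Ht) as [-> ->]; split; ring. }
  rewrite Rint_RInt, Eq by exact Ex.
  change (plus (RInt (fun t => Q t - Q (1/2)) 0 (1/2)) (RInt (fun t => - Q t) 0 (1/2))
    = - Q (1/2) / 2).
  rewrite <- RInt_plus by now apply ex_RInt_continuous_R.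
  rewrite (RInt_ext _ (fun _ => - Q (1/2))) by (intros; unfold plus; simpl; ring).
  rewrite RInt_const; unfold scal; simpl; unfold mult; simpl; field.
Qed.

Lemma antiperiodic_poly_Rint_sqr_pos m l g : antiperiodic_poly m l g -> l <> 0 ->
  0 < Rint (fun s => g s ^ 2) 0 1.
Proof.
  intros [P [HP Hrep]] Hl.
  assert (CP := poly_lead_continuous _ _ _ HP).
  assert (CP2 : forall x, continuous (fun t => P t ^ 2) x)
    by (intros; now apply continuous_sqr).
  assert (CN2 : forall x, continuous (fun t => (- P t) ^ 2) x)
    by (intros x; apply continuous_sqr; exact (continuous_opp P x (CP x))).
  destruct (RInt_halves (fun s => g s ^ 2) _ _ CP2 CN2) as [Ex Eq].
  { intros t Ht; now destruct (Hrep t Ht) as [-> ->]. }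
  rewrite Rint_RInt, Eq by exact Ex.
  assert (0 < RInt (fun t => P t ^ 2) 0 (1/2)).
  { apply RInt_gt_0_witness; [lra|exact CP2|intros; apply pow2_ge_0|].
    destruct (poly_lead_nonzero (1/2) m ltac:(lra) l P HP Hl) as [t0 [Ht0 Hne]].
    exists t0; split; [exact Ht0|now apply pow2_gt_0]. }
  assert (0 <= RInt (fun t => (- P t) ^ 2) 0 (1/2)).
  { apply RInt_ge_0; [lra|now apply ex_RInt_continuous_R|intros; apply pow2_ge_0]. }
  now apply Rplus_lt_le_0_compat.
Qed.

Lemma pwm_next_antiperiodic_poly k L' :
  List.Forall (fun g => exists l, antiperiodic_poly (S k) l g) L' ->
  (exists l, l <> 0 /\ antiperiodic_poly (S k) l (last (pwm0 (1/2) :: L') (fun _ => 0))) ->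
  exists l, l <> 0 /\ antiperiodic_poly (S (S k)) l (pwm_next (1/2) (pwm0 (1/2) :: L')).
Proof.
  intros HL' [l [Hl Hlast]].
  set (L := pwm0 (1/2) :: L').
  set (ps := fun t => Rint (last L (fun _ => 0)) (1/2) t).
  destruct (antiperiodic_poly_Rint_from_half _ _ _ Hlast) as [Q [HQ Hps]].
  set (w := fun g : R -> R => Rint (fun s => g s * ps s) 0 1).
  assert (Hw0 : w (pwm0 (1/2)) = - Q (1/2) / 2)
    by exact (Rint_pwm0_mul ps Q (poly_lead_continuous _ _ _ HQ) Hps).
  destruct (antiperiodic_poly_fold (S k) w L' HL') as [ls [Ps [HPs HPsrep]]].
  set (lq := l / INR (S (S k))).
  assert (Hlq : lq <> 0).
  { apply Rmult_integral_contrapositive_currified; [exact Hl|].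
    apply Rinv_neq_0_compat, not_0_INR; lia. }
  set (pbar := fun t => ps t - fold_right Rplus 0 (map (fun g => g t * w g) L)).
  (* subtracting the mean [w p_0] is exactly what makes [p_k^*] antiperiodic *)
  assert (Hpbar : antiperiodic_poly (S (S k)) lq pbar).
  { exists (fun t => 1 * (Q t + (- Q (1/2) - w (pwm0 (1/2)))) + (-1) * Ps t); split.
    - replace lq with (1 * lq + (-1) * 0) by ring.
      apply poly_lead_lin; [now apply poly_lead_add_const | exact (poly_lead_weaken _ _ _ HPs)].
    - intros t Ht; destruct (Hps t Ht) as [A B], (HPsrep t Ht) as [C E].
      unfold pbar, L; cbn [fold_right map]; unfold ps, L; rewrite A, B, C, E, Hw0.
      unfold pwm0; split; field. }
  set (nrm := sqrt (Rint (fun s => pbar s ^ 2) 0 1)).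
  assert (Hnrm : 0 < nrm) by exact (sqrt_lt_R0 _ (antiperiodic_poly_Rint_sqr_pos _ _ _ Hpbar Hlq)).
  change (pwm_next (1/2) L) with (fun t => pbar t / nrm).
  exists (/ nrm * lq + 0 * 0); split.
  - rewrite Rmult_0_l, Rplus_0_r.
    apply Rmult_integral_contrapositive_currified; [apply Rinv_neq_0_compat; lra|exact Hlq].
  - apply (antiperiodic_poly_ext _ _ (fun t => / nrm * pbar t + 0 * 0));
      [intros t; unfold Rdiv; ring|].
    apply antiperiodic_poly_lin; [exact Hpbar|apply antiperiodic_poly_zero].
Qed.

Lemma pwm_list_length D k : length (pwm_list D k) = S k.
Proof.
  induction k as [|[|k] IH]; [reflexivity|reflexivity|].
  change (pwm_list D (S (S k))) with
    (pwm_list D (S k) ++ (pwm_next D (pwm_list D (S k)) :: nil)).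
  rewrite length_app, IH; simpl; lia.
Qed.

Lemma pwm_SS D k : pwm D (S (S k)) = pwm_next D (pwm_list D (S k)).
Proof.
  unfold pwm; change (pwm_list D (S (S k))) with
    (pwm_list D (S k) ++ (pwm_next D (pwm_list D (S k)) :: nil)).
  rewrite app_nth2; rewrite pwm_list_length; [|lia].
  now replace (S (S k) - S (S k))%nat with 0%nat by lia.
Qed.

Lemma pwm_list_last D k : last (pwm_list D (S k)) (fun _ => 0) = pwm D (S k).
Proof.
  destruct k as [|k]; [reflexivity|].
  rewrite pwm_SS; change (pwm_list D (S (S k))) with
    (pwm_list D (S k) ++ (pwm_next D (pwm_list D (S k)) :: nil)).
  apply last_last.
Qed.

Lemma pwm1_antiperiodic_poly : antiperiodic_poly 1 (4 * sqrt 3) (pwm1 (1/2)).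
Proof.
  exists (fun t => - sqrt 3 + 4 * sqrt 3 * t); split.
  - exists (fun i => match i with O => - sqrt 3 | _ => 4 * sqrt 3 end); split; [reflexivity|].
    intros t; unfold poly_fun; simpl; ring.
  - intros t Ht; unfold pwm1; split.
    + destruct (Rle_dec t (1/2)); [field|lra].
    + destruct (Rle_dec (t + 1/2) (1/2)).
      * replace t with 0 by lra; field.
      * field.
Qed.

Lemma pwm_list_antiperiodic_poly k : exists L',
  pwm_list (1/2) (S k) = pwm0 (1/2) :: L' /\
  List.Forall (fun g => exists l, antiperiodic_poly (S k) l g) L' /\
  exists l, l <> 0 /\ antiperiodic_poly (S k) l (pwm (1/2) (S k)).
Proof.
  assert (H1 : 4 * sqrt 3 <> 0)
    by (apply Rmult_integral_contrapositive_currified; [lra|apply Rgt_not_eq, sqrt_lt_R0; lra]).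
  induction k as [|k [L' [HL [HF Hl]]]].
  - exists (pwm1 (1/2) :: nil); split; [reflexivity|split].
    + repeat constructor; exists (4 * sqrt 3); apply pwm1_antiperiodic_poly.
    + exists (4 * sqrt 3); split; [exact H1|apply pwm1_antiperiodic_poly].
  - assert (Hnext : exists l, l <> 0 /\
        antiperiodic_poly (S (S k)) l (pwm_next (1/2) (pwm0 (1/2) :: L'))).
    { apply pwm_next_antiperiodic_poly; [exact HF|]; now rewrite <- HL, pwm_list_last. }
    exists (L' ++ pwm_next (1/2) (pwm0 (1/2) :: L') :: nil); split; [|split].
    + change (pwm_list (1/2) (S (S k))) with
        (pwm_list (1/2) (S k) ++ (pwm_next (1/2) (pwm_list (1/2) (S k)) :: nil)).
      now rewrite HL.
    + apply Forall_app; split.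
      * refine (Forall_impl _ _ HF); intros g [l Hg].
        exists 0; exact (antiperiodic_poly_weaken _ _ _ Hg).
      * destruct Hnext as [l [_ Hg]]; repeat constructor; now exists l.
    + now rewrite pwm_SS, HL.
Qed.

Lemma pwm_antiperiodic_poly k :
  exists l, l <> 0 /\ antiperiodic_poly (S k) l (pwm (1/2) (S k)).
Proof. now destruct (pwm_list_antiperiodic_poly k) as [L' [_ [_ H]]]. Qed.

Fixpoint pwm_comb (a : nat -> R) (n : nat) (t : R) : R :=
  match n with
  | O => 0
  | S n => pwm_comb a n t + a (S n) * pwm (1/2) (S n) t
  end.

Lemma pwm_comb_ext a b n t :
  (forall k, (1 <= k <= n)%nat -> a k = b k) -> pwm_comb a n t = pwm_comb b n t.
Proof.
  induction n as [|n IHn]; intros H; simpl; [reflexivity|].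
  rewrite IHn, (H (S n)) by (lia || (intros; apply H; lia)); reflexivity.
Qed.

Lemma pwm_comb_sum a n t :
  pwm_comb a (S n) t = sum_f_R0 (fun k => a (S k) * pwm (1/2) (S k) t) n.
Proof.
  induction n as [|n IHn]; [simpl; ring|].
  change (pwm_comb a (S (S n)) t) with (pwm_comb a (S n) t + a (S (S n)) * pwm (1/2) (S (S n)) t).
  now rewrite IHn.
Qed.

(* Triangular elimination: subtracting a multiple of p_m kills the coefficient of t^m. *)
Lemma antiperiodic_poly_pwm_comb m : forall l g, antiperiodic_poly m l g ->
  exists a, forall t, 0 <= t <= 1 -> g t = pwm_comb a m t.
Proof.
  induction m as [|m IHm]; intros l g Hg.
  - destruct Hg as [P [[c [_ HP]] Hrep]]; exists (fun _ => 0); intros t Ht; simpl.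
    assert (Hc : c 0%nat = 0).
    { destruct (Hrep 0) as [_ B]; [lra|]; destruct (Hrep (1/2)) as [A _]; [lra|].
      replace (0 + 1/2) with (1/2) in B by ring.
      rewrite HP in A, B; unfold poly_fun in A, B; simpl in A, B; lra. }
    destruct (Rle_dec t (1/2)).
    + destruct (Hrep t) as [-> _]; [lra|]; rewrite HP; unfold poly_fun; simpl; rewrite Hc; ring.
    + replace t with (t - 1/2 + 1/2) by ring.
      destruct (Hrep (t - 1/2)) as [_ ->]; [lra|]; rewrite HP; unfold poly_fun; simpl.
      rewrite Hc; ring.
  - destruct (pwm_antiperiodic_poly m) as [d [Hd Hp]].
    assert (H1 := antiperiodic_poly_lin _ _ _ _ _ 1 (- (l / d)) Hg Hp).
    replace (1 * l + - (l / d) * d) with 0 in H1 by (field; exact Hd).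
    destruct (antiperiodic_poly_drop _ _ H1) as [l' H2].
    destruct (IHm _ _ H2) as [a' Ha'].
    exists (fun k => if Nat.eqb k (S m) then l / d else a' k); intros t Ht; simpl.
    rewrite Nat.eqb_refl, (pwm_comb_ext _ a').
    + rewrite <- Ha' by exact Ht; ring.
    + intros k Hk; destruct (Nat.eqb_spec k (S m)); [lia|reflexivity].
Qed.

Theorem mainTheorem3 (Np : nat) (HNp : (1 <= Np)%nat) (f : R -> R)
  (Hpoly : exists c : nat -> R, forall t : R, 0 <= t < 1/2 ->
             f t = sum_f_R0 (fun i => c i * t ^ i) Np)
  (Hcont : continuity_pt f (1/2))
  (Hanti : forall t : R, 0 <= t <= 1/2 -> f (t + 1/2) = - f t) :
  exists a : nat -> R, forall t : R, 0 <= t <= 1 ->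
    f t = sum_f_R0 (fun k => a (S k) * pwm (1/2) (S k) t) (Np - 1).
Proof.
  destruct Hpoly as [c Hc].
  assert (HP : poly_lead Np (c Np) (poly_fun c Np)) by (now exists c).
  assert (Hhalf : f (1/2) - poly_fun c Np (1/2) = 0).
  { apply (continuous_vanishing_on_interval (fun t => f t - poly_fun c Np t) 0 (1/2));
      [|lra|lra|intros t Ht; rewrite Hc by lra; unfold poly_fun; ring].
    apply continuity_pt_minus; [exact Hcont|].
    apply continuity_pt_filterlim, (poly_lead_continuous _ _ _ HP). }
  assert (Hf : antiperiodic_poly Np (c Np) f).
  { exists (poly_fun c Np); split; [exact HP|]; intros t Ht.
    assert (E : f t = poly_fun c Np t).
    { destruct (Rlt_le_dec t (1/2)); [apply Hc; lra|replace t with (1/2) by lra; lra]. }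
    now rewrite Hanti, E. }
  destruct (antiperiodic_poly_pwm_comb _ _ _ Hf) as [a Ha]; exists a; intros t Ht.
  destruct Np as [|n]; [lia|].
  now rewrite Ha, pwm_comb_sum, Nat.sub_1_r.
Qed.
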